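(* Let $F$ be a probability distribution on $[0,\infty)$ with finite mean $\mu>0$, and suppose its cumulative distribution function $F$ is differentiable in a neighborhood of $\mu$ with density $f=F'$ positive on that neighborhood. Then $p^*=\mu$ is the unique maximizer of $p\mapsto \mathsf{W}(p,F)$ over $p\in\mathbb{R}_+$.
   Context: Symmetric bilateral trade: $B,S$ i.i.d. with distribution $F$. Posting price $p$, trade occurs iff $B>p\ge S$. Welfare: $\mathsf{W}(p,F)=\mathbb{E}[S]+\mathbb{E}[(B-S)\mathbf 1_{B>p\ge S}]$. *)

From HB Require Import structures.
From mathcomp Require Import all_boot all_order all_algebra.
From mathcomp Require Import all_classical all_reals all_analysis.
Set Implicit Arguments. Unset Strict Implicit. Unset Printing Implicit Defensive.
Import Order.TTheory GRing.Theory Num.Theory.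
Import numFieldNormedType.Exports.
Local Open Scope classical_set_scope.
Local Open Scope ring_scope.

Definition cdfF (R : realType) (P : probability R R) (x : R) : R :=
  fine (P `]-oo, x]%classic).

Definition mean (R : realType) (P : probability R R) : R :=
  Rintegral P setT (fun x => x).

(* Welfare W(p,F) = E[S] + E[(B - S) 1_{B > p >= S}] with (B,S) ~ P (x) P,
   B the first coordinate, S the second (i.i.d.). *)
Definition welfare (R : realType) (P : probability R R) (p : R) : R :=
  mean P +
  Rintegral (P \x P)%E [set z : R * R | p < z.1 /\ z.2 <= p]
            (fun z => z.1 - z.2).

From HB Require Import structures.
From mathcomp Require Import all_boot all_order all_algebra.
From mathcomp Require Import all_classical all_reals all_analysis.
From mathcomp Require Import measurable_realfun ring lra.
Import Order.TTheory GRing.Theory Num.Theory.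
Import numFieldNormedType.Exports.
Local Open Scope classical_set_scope.
Local Open Scope ring_scope.

(* Let X ~ P have mean mu and, for a price p, define the excess
     excess p = E[(X - mu) 1_{X > p}].
   1. Since B and S are independent with law P, Fubini separates
        E[(B - S) 1_{B > p >= S}] = E[B 1_{B>p}] P(S<=p) - P(B>p) E[S 1_{S<=p}],
      and with P(X<=p) = 1 - P(X>p), E[X 1_{X<=p}] = mu - E[X 1_{X>p}] this
      is excess p; hence W(p) = mu + excess p  (welfare_excess).
   2. For p < q, excess p - excess q = E[(X - mu) 1_{p < X <= q}], whose
      integrand is <= 0 when q <= mu and >= 0 when mu <= p: the excess grows
      up to mu and decreases afterwards, so mu maximizes W  (excess_le_mean).
   3. A positive derivative of the cdf near mu makes it strictly increasing
      there, so slabs ]r, r'] close to mu but away from it carry positive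
      mass and a strictly signed integrand: excess p < excess mu for p <> mu.
   The general measure-theoretic facts come first, then the excess and its
   monotonicity, and corollary5 is assembled at the end. *)

Lemma derive1_gt0_ball_incr {R : realType} {f : R -> R} {a e : R} :
  (forall x, `|x - a| < e -> derivable f x 1 /\ 0 < derive1 f x) ->
  forall x y, a - e < x -> x < y -> y < a + e -> f x < f y.
Proof.
move=> Hd x y ex xy ye.
have inball z : z \in `]a - e, a + e[ -> `|z - a| < e.
  by rewrite in_itv /= ltr_norml => /andP[? ?]; apply/andP; split; lra.
apply: (@gtr0_derive1_lt _ f (a - e) (a + e) _ _ false true) => //.
- by move=> z /inball /Hd[].
- by move=> z /inball /Hd[].
- by apply: derivable_within_continuous => z /inball /Hd[].
- by rewrite in_itv /= ex; lra.
- by rewrite in_itv /= ye; lra.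
Qed.

Section Welfare.
Context {R : realType} (P : probability R R).

Lemma integral_RintegralE (f : R -> R) : P.-integrable setT (EFin \o f) ->
  (\int[P]_x (f x)%:E)%E = (Rintegral P setT f)%:E.
Proof. by move=> intf; rewrite /Rintegral fineK //; exact: integrable_fin_num. Qed.

Lemma integrable_prod_separable {a b : R -> R} :
  P.-integrable setT (EFin \o a) -> P.-integrable setT (EFin \o b) ->
  (P \x P)%E.-integrable setT (EFin \o (fun z : R * R => a z.1 * b z.2)).
Proof.
move=> inta intb.
have ma : measurable_fun setT a by apply/measurable_EFinP; exact: measurable_int inta.
have mb : measurable_fun setT b by apply/measurable_EFinP; exact: measurable_int intb.
have mab : measurable_fun setT (EFin \o (fun z : R * R => a z.1 * b z.2)).
  apply/measurable_EFinP; apply: measurable_funM.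
  - exact: measurableT_comp ma measurable_fst.
  - exact: measurableT_comp mb measurable_snd.
apply/(@integrable12ltyP _ _ _ _ _ P P _ mab).
have /integrableP[_ finA] := inta; have /integrableP[_ finB] := intb.
have mnb : measurable_fun setT (fun y => `|(b y)%:E|)%E.
  by apply: measurableT_comp => //; exact/measurable_EFinP.
have mna : measurable_fun setT (fun y => `|(a y)%:E|)%E.
  by apply: measurableT_comp => //; exact/measurable_EFinP.
rewrite (eq_integral (fun x => `|(a x)%:E| * \int[P]_y `|(b y)%:E|)%E); last first.
  move=> x _ /=; under eq_integral do rewrite normrM EFinM.
  by rewrite ge0_integralZl_EFin.
rewrite ge0_integralZr //; last exact: integral_ge0.
by apply: lte_mul_pinfty => //; rewrite ?ge0_fin_numE //; exact: integral_ge0.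
Qed.

Lemma Rintegral_prod_separable {a b : R -> R} :
  P.-integrable setT (EFin \o a) -> P.-integrable setT (EFin \o b) ->
  Rintegral (P \x P)%E setT (fun z : R * R => a z.1 * b z.2) =
  Rintegral P setT a * Rintegral P setT b.
Proof.
move=> inta intb.
rewrite /Rintegral -(@integral12_prod_meas1 _ _ _ _ _ P P) //;
  last exact: integrable_prod_separable.
rewrite (eq_integral (fun x => (a x)%:E * (Rintegral P setT b)%:E))%E; last first.
  move=> x _; rewrite /fubini_F /=; under eq_integral do rewrite EFinM.
  by rewrite integralZl // integral_RintegralE.
by rewrite integralZr // integral_RintegralE.
Qed.

Lemma integrable_patch (f : R -> R) (D : set R) : measurable D ->
  P.-integrable setT (EFin \o f) -> P.-integrable setT (EFin \o (f \_ D)).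
Proof.
move=> mD intf; rewrite -restrict_EFin; apply: (integrable_mkcond _ mD).1.
exact: integrableS measurableT mD (@subsetT _ D) intf.
Qed.

Lemma integrable_cst {D : set R} (c : R) : measurable D ->
  P.-integrable D (EFin \o (fun _ : R => c)).
Proof. by move=> mD; exact: finite_measure_integrable_cst. Qed.

Definition above (p : R) := `]p, +oo[%classic.
Definition below (p : R) := `]-oo, p]%classic.
Definition slab (p q : R) := `]p, q]%classic.

Lemma measurable_above p : measurable (above p). Proof. exact: measurable_itv. Qed.
Lemma measurable_below p : measurable (below p). Proof. exact: measurable_itv. Qed.
Lemma measurable_slab p q : measurable (slab p q). Proof. exact: measurable_itv. Qed.
Local Hint Resolve measurable_above measurable_below measurable_slab : core.

Lemma mem_above p x : (x \in above p) = (p < x).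
Proof.
by apply/idP/idP => [/set_mem|px]; [|apply/mem_set]; rewrite /above /= in_itv /= andbT.
Qed.

Lemma mem_below p x : (x \in below p) = (x <= p).
Proof.
by apply/idP/idP => [/set_mem|xp]; [|apply/mem_set]; rewrite /below /= in_itv.
Qed.

Lemma setT_above_below p : [set: R] = above p `|` below p.
Proof.
apply/seteqP; split => x //= _; rewrite /above /below /= !in_itv /= andbT.
by case: (ltP p x) => px; [left|right].
Qed.

Lemma disjoint_above_below p : [disjoint above p & below p].
Proof.
apply/disj_setPS => x /=; rewrite /above /below /= !in_itv /= andbT => -[px xp].
by move: (lt_le_trans px xp); rewrite ltxx.
Qed.

Lemma Rintegral_above_split (f : R -> R) {p q : R} : p < q ->
  P.-integrable setT (EFin \o f) ->
  Rintegral P (above p) f = Rintegral P (slab p q) f + Rintegral P (above q) f.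
Proof.
move=> pq intf.
have -> : above p = slab p q `|` above q.
  apply/seteqP; split => x /=; rewrite /above /slab /= !in_itv /= ?andbT.
    by move=> px; case: (leP x q) => xq; [left; rewrite px | right].
  by case=> [/andP[] //|]; exact: lt_trans.
apply: Rintegral_setU => //.
- by apply: integrableS measurableT _ (@subsetT _ _) intf; exact: measurableU.
- apply/disj_setPS => x /=; rewrite /above /slab /= !in_itv /= andbT.
  by case=> /andP[_ xq] qx; move: (le_lt_trans xq qx); rewrite ltxx.
Qed.

Definition tail_mean p := Rintegral P (above p) (fun x => x).
Definition head_mean p := Rintegral P (below p) (fun x => x).
Definition tail_prob p := Rintegral P (above p) (fun _ => 1).
Definition head_prob p := Rintegral P (below p) (fun _ => 1).

Lemma tail_head_prob p : tail_prob p + head_prob p = 1.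
Proof.
rewrite /tail_prob /head_prob -Rintegral_setU -?setT_above_below //.
- by rewrite Rintegral_cst // mul1r; exact: (congr1 fine (probability_setT P)).
- exact: integrable_cst.
- exact: disjoint_above_below.
Qed.

Lemma head_prob_cdf p : head_prob p = cdfF P p.
Proof. by rewrite /head_prob Rintegral_cst ?mul1r. Qed.

Hypothesis integrable_id : P.-integrable setT (fun x : R => x%:E).

(* The gain from trade, separated with Fubini using
   (B - S) 1_{B > p >= S} = (B 1_{B>p}) 1_{S<=p} - 1_{B>p} (S 1_{S<=p}). *)
Lemma welfare_split p : welfare P p =
  mean P + (tail_mean p * head_prob p - tail_prob p * head_mean p).
Proof.
rewrite /welfare; congr (_ + _); rewrite Rintegral_mkcond.
set a1 := (fun x : R => x) \_ (above p); set b1 := (fun _ : R => (1 : R)) \_ (below p).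
set a2 := (fun _ : R => (1 : R)) \_ (above p); set b2 := (fun x : R => x) \_ (below p).
have -> : (fun z : R * R => z.1 - z.2) \_ [set z : R * R | p < z.1 /\ z.2 <= p] =
          (fun z => a1 z.1 * b1 z.2 - a2 z.1 * b2 z.2).
{ apply/funext => z; rewrite /a1 /b1 /a2 /b2 !patchE !mem_above !mem_below.
  have -> : (z \in [set z : R * R | p < z.1 /\ z.2 <= p]) = (p < z.1) && (z.2 <= p).
    by apply/idP/idP => [/set_mem /= [-> ->] //|/andP zp]; exact/mem_set.
  case: (ltP p z.1) => _; case: (leP z.2 p) => _ /=; rewrite ?mulr1 ?mul1r //.
  all: by rewrite /point /= ?mulr0 ?mul0r ?subr0. }
have int1 : P.-integrable setT (EFin \o (fun _ : R => (1 : R))) by exact: integrable_cst.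
have inta1 : P.-integrable setT (EFin \o a1) by apply: integrable_patch.
have intb1 : P.-integrable setT (EFin \o b1) by apply: integrable_patch.
have inta2 : P.-integrable setT (EFin \o a2) by apply: integrable_patch.
have intb2 : P.-integrable setT (EFin \o b2) by apply: integrable_patch.
transitivity (Rintegral (P \x P)%E setT (fun z => a1 z.1 * b1 z.2) -
              Rintegral (P \x P)%E setT (fun z => a2 z.1 * b2 z.2)).
  have intab1 := integrable_prod_separable inta1 intb1.
  have intab2 := integrable_prod_separable inta2 intb2.
  exact: RintegralB.
by rewrite !Rintegral_prod_separable // /a1 /b1 /a2 /b2 -!Rintegral_mkcond.
Qed.

Lemma tail_head_mean p : tail_mean p + head_mean p = mean P.
Proof.
rewrite /tail_mean /head_mean /mean -Rintegral_setU -?setT_above_below //.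
exact: disjoint_above_below.
Qed.

Lemma integrable_centered : P.-integrable setT (EFin \o (fun x => x - mean P)).
Proof.
rewrite (_ : EFin \o _ = ((EFin \o (fun x => x)) \- (EFin \o (fun=> mean P)))%E) //.
by apply: integrableB => //; exact: integrable_cst.
Qed.

Definition excess p := Rintegral P (above p) (fun x => x - mean P).

Lemma excessE p : excess p = tail_mean p - mean P * tail_prob p.
Proof.
rewrite /excess RintegralB //; last exact: integrable_cst.
  by rewrite /tail_prob !Rintegral_cst // mul1r.
exact: integrableS measurableT _ (@subsetT _ _) integrable_id.
Qed.

Lemma welfare_excess p : welfare P p = mean P + excess p.
Proof.
rewrite welfare_split excessE.
have -> : head_prob p = 1 - tail_prob p by rewrite -(tail_head_prob p); ring.
have -> : head_mean p = mean P - tail_mean p by rewrite -(tail_head_mean p); ring.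
ring.
Qed.

Lemma excess_diff {p q : R} : p < q ->
  excess p - excess q = Rintegral P (slab p q) (fun x => x - mean P).
Proof.
move=> pq; rewrite /excess (Rintegral_above_split _ pq integrable_centered).
ring.
Qed.

Lemma slab_prob {p q : R} : p < q -> fine (P (slab p q)) = head_prob q - head_prob p.
Proof.
move=> pq.
have := Rintegral_above_split (fun _ => 1) pq (integrable_cst (1 : R) measurableT).
rewrite -/(tail_prob p) -/(tail_prob q) Rintegral_cst // mul1r => split_pq.
have := tail_head_prob p; have := tail_head_prob q; lra.
Qed.

Lemma slab_centered_le {p q : R} (c : R) : p < q ->
  (forall x, p < x <= q -> x - mean P <= c) ->
  Rintegral P (slab p q) (fun x => x - mean P) <= c * (head_prob q - head_prob p).
Proof.
move=> pq ub; rewrite -slab_prob // -Rintegral_cst //.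
apply: le_Rintegral => //.
- exact: integrableS measurableT _ (@subsetT _ _) integrable_centered.
- exact: integrable_cst.
Qed.

Lemma slab_centered_ge {p q : R} (c : R) : p < q ->
  (forall x, p < x <= q -> c <= x - mean P) ->
  c * (head_prob q - head_prob p) <= Rintegral P (slab p q) (fun x => x - mean P).
Proof.
move=> pq lb; rewrite -slab_prob // -Rintegral_cst //.
apply: le_Rintegral => //.
- exact: integrable_cst.
- exact: integrableS measurableT _ (@subsetT _ _) integrable_centered.
Qed.

Lemma excess_nondecr {p q : R} : p <= q -> q <= mean P -> excess p <= excess q.
Proof.
rewrite le_eqVlt => /predU1P[-> //|pq] qmu.
rewrite -subr_le0 excess_diff //; apply: le_trans (slab_centered_le 0 pq _) _.
  by move=> x /andP[_ xq]; rewrite subr_le0 (le_trans xq).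
by rewrite mul0r.
Qed.

Lemma excess_nonincr {p q : R} : mean P <= p -> p <= q -> excess q <= excess p.
Proof.
move=> mup; rewrite le_eqVlt => /predU1P[-> //|pq].
rewrite -subr_ge0 excess_diff //; apply: le_trans _ (slab_centered_ge 0 pq _).
  by rewrite mul0r.
by move=> x /andP[px _]; rewrite subr_ge0 (le_trans mup) // ltW.
Qed.

Lemma excess_lt_left {r r' : R} : r < r' -> r' < mean P ->
  head_prob r < head_prob r' -> excess r < excess r'.
Proof.
move=> rr' r'mu Fr; rewrite -subr_lt0 excess_diff //.
apply: le_lt_trans (slab_centered_le (r' - mean P) rr' _) _.
  by move=> x /andP[_ xr']; rewrite lerB.
by rewrite nmulr_rlt0 ?subr_lt0 ?subr_gt0.
Qed.

Lemma excess_lt_right {r r' : R} : mean P < r -> r < r' ->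
  head_prob r < head_prob r' -> excess r' < excess r.
Proof.
move=> mur rr' Fr; rewrite -subr_gt0 excess_diff //.
apply: lt_le_trans _ (slab_centered_ge (r - mean P) rr' _).
  by rewrite mulr_gt0 ?subr_gt0.
by move=> x /andP[rx _]; rewrite lerB // ltW.
Qed.

Lemma excess_le_mean p : excess p <= excess (mean P).
Proof.
case: (ltgtP p (mean P)) => [pmu|mup|-> //].
- exact: excess_nondecr (ltW pmu) (lexx _).
- exact: excess_nonincr (lexx _) (ltW mup).
Qed.

(* If the cdf is strictly increasing near the mean, the mean is the unique
   maximizer: move from p towards the mean into the window, then cross a
   charged slab inside it. *)
Lemma excess_lt_mean {e p : R} : 0 < e ->
  (forall x y, mean P - e < x -> x < y -> y < mean P + e ->
     cdfF P x < cdfF P y) ->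
  p != mean P -> excess p < excess (mean P).
Proof.
move=> e0 cdf_incr.
have Fincr x y : mean P - e < x -> x < y -> y < mean P + e ->
    head_prob x < head_prob y.
  by rewrite !head_prob_cdf; exact: cdf_incr.
case: (ltgtP p (mean P)) => // [pmu|mup] _.
- pose r := Num.max p (mean P - e / 2); pose r' := (r + mean P) / 2.
  have pr : p <= r by rewrite le_max lexx.
  have rmu : r < mean P by rewrite gt_max pmu; lra.
  have er : mean P - e < r by rewrite lt_max; apply/orP; right; lra.
  apply: le_lt_trans (excess_nondecr pr (ltW rmu)) _.
  apply: lt_le_trans (excess_lt_left _ _ (Fincr r r' _ _ _)) _; rewrite /r'; try lra.
  apply: excess_nondecr; lra.
- pose r := Num.min p (mean P + e / 2); pose r' := (r + mean P) / 2.
  have rp : r <= p by rewrite ge_min lexx.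
  have mur : mean P < r by rewrite lt_min mup; lra.
  have re : r < mean P + e by rewrite gt_min; apply/orP; right; lra.
  apply: le_lt_trans (excess_nonincr (ltW mur) rp) _.
  apply: lt_le_trans (excess_lt_right _ _ (Fincr r' r _ _ _)) _; rewrite /r'; try lra.
  apply: excess_nonincr; lra.
Qed.

End Welfare.

Theorem corollary5 (R : realType) (P : probability R R)
  (Hsupp : P `[0, +oo[%classic = 1%E)
  (Hint : P.-integrable setT (fun x : R => x%:E))
  (Hmu : 0 < mean P)
  (Hdens : exists2 e : R, 0 < e &
     forall x : R, `|x - mean P| < e ->
       derivable (cdfF P) x 1 /\ 0 < derive1 (cdfF P) x) :
  0 <= mean P /\
  (forall p : R, 0 <= p -> welfare P p <= welfare P (mean P)) /\
  (forall p : R, 0 <= p -> welfare P p = welfare P (mean P) -> p = mean P).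
Proof.
have [e e0 Hd] := Hdens.
split; first exact: ltW.
split=> p _; first by rewrite !(welfare_excess P Hint) lerD2l (excess_le_mean P Hint).
rewrite !(welfare_excess P Hint) => /addrI Wpmu; apply/eqP/negPn/negP => pmu.
by move: (excess_lt_mean P Hint e0 (derive1_gt0_ball_incr Hd) pmu); rewrite Wpmu ltxx.
Qed.
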